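(* Let $\oplus$ be the functor from $\textnormal{\textbf{Conv}}\times\textnormal{\textbf{Conv}}$ to $\textnormal{\textbf{Conv}}$ which takes pairs of Euclidean spaces $(\mathbb{R}^n,\mathbb{R}^m)$ to their direct sum $\mathbb{R}^n\oplus \mathbb{R}^m$ and takes pairs of bifunctions ($F$ from $\mathbb{R}^m$ to $\mathbb{R}^n$, $G$ from $\mathbb{R}^p$ to $\mathbb{R}^q$) to their pointwise sum, i.e., the bifunction $F\oplus G$ from $\mathbb{R}^m\oplus\mathbb{R}^p$ to $\mathbb{R}^n\oplus\mathbb{R}^q$ given by \begin{multline*} (F\oplus G)((u,y),(x,z)) = F(u,x) + G(y,z) \\ \text{ for all } u\in\mathbb{R}^m,x\in\mathbb{R}^n,y\in\mathbb{R}^p, \textnormal{and } z\in\mathbb{R}^q. \end{multline*} Then $(\textnormal{\textbf{Conv}}, \oplus, \mathbb{R}^0)$ is a strict symmetric monoidal category.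
   Context: $\textnormal{\textbf{Conv}}$ is the category whose objects are Euclidean spaces, whose morphisms from $\mathbb{R}^m$ to $\mathbb{R}^n$ are convex bifunctions, i.e., jointly convex functions $F\colon\mathbb{R}^m\times\mathbb{R}^n\to\mathbb{R}\cup\{\pm\infty\}$, with identity $\mathrm{id}_X(x,x')=0$ if $x=x'$ and $+\infty$ otherwise, and composition $(G\circ F)(u,y)=\inf_{x}\{F(u,x)+G(x,y)\}$. *)

From HB Require Import structures.
From mathcomp Require Import all_boot all_order all_algebra.
From mathcomp Require Import all_classical all_reals ereal.
Set Implicit Arguments. Unset Strict Implicit. Unset Printing Implicit Defensive.
Import Order.TTheory GRing.Theory Num.Theory.
Local Open Scope ring_scope.

(* The Euclidean space R^n is modelled as row vectors 'rV[R]_n; objects of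
   Conv are identified with their dimension n : nat. *)

Definition bifun (R : realType) (m n : nat) := 'rV[R]_m -> 'rV[R]_n -> \bar R.

(* Inf-addition (Rockafellar's convention +oo + -oo = +oo). *)
Definition iadd (R : realType) (a b : \bar R) : \bar R := dual_adde a b.

(* Joint convexity of an extended-real-valued function: its epigraph
   {((u,x),mu) | F u x <= mu} is convex. *)
Definition convex_bifun (R : realType) (m n : nat) (F : bifun R m n) : Prop :=
  forall (u u' : 'rV[R]_m) (x x' : 'rV[R]_n) (a b t : R),
    (F u x <= a%:E)%E -> (F u' x' <= b%:E)%E -> 0 <= t <= 1 ->
    (F (t *: u + (1 - t) *: u')%R (t *: x + (1 - t) *: x')%R
       <= (t * a + (1 - t) * b)%:E)%E.

Definition id_bif (R : realType) (n : nat) : bifun R n n :=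
  fun x x' => if x == x' then 0%E else +oo%E.

(* Composition: bcomp F G = G o F, (G o F)(u,y) = inf_x F(u,x) + G(x,y). *)
Definition bcomp (R : realType) (m n p : nat) (F : bifun R m n) (G : bifun R n p)
  : bifun R m p :=
  fun u y => ereal_inf [set iadd (F u x) (G x y) | x in [set: 'rV[R]_n]]%classic.

(* The direct sum F (+) G : R^m (+) R^p -> R^n (+) R^q, where R^m (+) R^p is
   'rV_(m + p) with (u, y) represented by row_mx u y. *)
Definition dsum (R : realType) (m n p q : nat) (F : bifun R m n) (G : bifun R p q)
  : bifun R (m + p) (n + q) :=
  fun a b => iadd (F (lsubmx a) (lsubmx b)) (G (rsubmx a) (rsubmx b)).

Definition castbf (R : realType) (m n m' n' : nat) (e1 : m = m') (e2 : n = n')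
  (F : bifun R m n) : bifun R m' n' :=
  fun a b => F (castmx (erefl 1%N, esym e1) a) (castmx (erefl 1%N, esym e2) b).

From HB Require Import structures.
From mathcomp Require Import all_boot all_order all_algebra.
From mathcomp Require Import all_classical all_reals ereal.
From mathcomp Require Import lra.
Import Order.TTheory GRing.Theory Num.Theory.
Import DualAddTheory.
Set Implicit Arguments. Unset Strict Implicit.

(* Inf-addition commutes with an infimum over a variable it does not involve,
   so an infimum over the middle space R^n (+) R^q of a sum of two independent
   terms splits into the sum of two infima: (+) preserves composition.
   Identities and the symmetry are indicator bifunctions of graphs of linear
   maps (the identity and the block swap); composing with such a bifunction is
   substitution, so naturality, involutivity and the hexagon reduce to
   identities between block-row maps.  Associativity and the unit laws are
   strict because (R^m (+) R^n) (+) R^p and R^m (+) (R^n (+) R^p) are the same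
   row space up to a cast of the dimension. *)

Section InfAddition.
Variable R : realType.
Local Open Scope classical_set_scope.
Local Open Scope ereal_scope.
Implicit Types (a b c : \bar R) (r : R).

Lemma iaddE a b : iadd a b = (a + b)%dE.
Proof. by []. Qed.

Lemma dadde_le_EFin_split a b r : (a + b)%dE <= r%:E ->
  exists r1 r2 : R, [/\ a <= r1%:E, b <= r2%:E & (r1 + r2 = r)%R].
Proof.
case: a => [r1||]; case: b => [r2||] //=; rewrite ?daddey //.
- rewrite -dEFinD lee_fin => sum_le.
  by exists r1, (r - r1)%R; split; rewrite ?lee_fin ?subrKC //; lra.
- by move=> _; exists r1, (r - r1)%R; split; rewrite ?leNye ?subrKC.
- by move=> _; exists (r - r2)%R, r2; split; rewrite ?leNye ?subrK.
- by move=> _; exists r, 0%R; split; rewrite ?leNye ?addr0.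
Qed.

Lemma ereal_inf_daddr (T : Type) (f : T -> \bar R) c :
  ereal_inf (range (fun x => f x + c)%dE) = (ereal_inf (range f) + c)%dE.
Proof.
apply/eqP; rewrite eq_le; apply/andP; split; last first.
  apply: le_ereal_inf_tmp => _ [x _ <-]; apply: lee_dD => //.
  by apply: ereal_inf_lbound; exists x.
case: c => [r||]; rewrite ?daddey ?leey //.
- have dEFinr a : (a + r%:E)%dE = a + r%:E by case: a.
  rewrite dEFinr -leeBlDr //; apply: le_ereal_inf_tmp => _ [x _ <-].
  by rewrite leeBlDr // -dEFinr; apply: ereal_inf_lbound; exists x.
- have [->|] := eqVneq (ereal_inf (range f)) +oo; first by rewrite leey.
  rewrite -ltey => /ereal_inf_lt[_ [x _ <-] fx_lt].
  apply: ge_ereal_inf; exists (f x + -oo)%dE; first by exists x.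
  by rewrite daddeNy ?leNye // lt_eqF.
Qed.

Lemma ereal_inf_daddl (T : Type) (f : T -> \bar R) c :
  ereal_inf (range (fun x => c + f x)%dE) = (c + ereal_inf (range f))%dE.
Proof.
rewrite daddeC -ereal_inf_daddr.
by congr ereal_inf; apply: eq_imagel => x _; rewrite daddeC.
Qed.

Lemma ereal_inf_dadd (T1 T2 : Type) (f : T1 -> \bar R) (g : T2 -> \bar R) :
  (ereal_inf (range f) + ereal_inf (range g))%dE =
  ereal_inf (range (fun xy : T1 * T2 => f xy.1 + g xy.2)%dE).
Proof.
apply/eqP; rewrite eq_le; apply/andP; split.
  apply: le_ereal_inf_tmp => _ [[x y] _ <-].
  by apply: lee_dD; apply: ereal_inf_lbound; [exists x | exists y].
rewrite -ereal_inf_daddr; apply: le_ereal_inf_tmp => _ [x _ <-].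
rewrite -ereal_inf_daddl; apply: le_ereal_inf_tmp => _ [y _ <-].
by apply: ereal_inf_lbound; exists (x, y).
Qed.

Lemma ereal_inf_dadd_indicator (T : eqType) (x0 : T) (g : T -> \bar R) :
  ereal_inf (range (fun x => (if x0 == x then 0 else +oo) + g x)%dE) = g x0.
Proof.
apply/eqP; rewrite eq_le; apply/andP; split.
  by apply: ereal_inf_lbound; exists x0 => //; rewrite eqxx dadd0e.
apply: le_ereal_inf_tmp => _ [x _ <-].
by case: eqP => [<-|_]; rewrite ?dadd0e ?daddye ?leey.
Qed.

Lemma iadd_indicator (b1 b2 : bool) :
  iadd (if b1 then 0 else +oo) (if b2 then 0 else +oo) =
  if b1 && b2 then 0 else +oo :> \bar R.
Proof. by case: b1 b2 => [] [] //=; rewrite /iadd /dual_adde /= addr0. Qed.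

End InfAddition.

Section RowBlocks.
Variable R : realType.
Local Open Scope ring_scope.

Variant row_split_spec m n : 'rV[R]_(m + n) -> Type :=
  RowSplit (u : 'rV[R]_m) (v : 'rV[R]_n) : row_split_spec (row_mx u v).

Lemma row_splitP m n (a : 'rV[R]_(m + n)) : row_split_spec a.
Proof. by rewrite -[a]hsubmxK; constructor. Qed.

Lemma eq_row_mxE m n (u u' : 'rV[R]_m) (v v' : 'rV[R]_n) :
  (row_mx u v == row_mx u' v') = (u == u') && (v == v').
Proof. by apply/eqP/andP => [/eq_row_mx[-> ->]|[/eqP-> /eqP->]]. Qed.

Lemma castmx_add0n m (e : (0 + m)%N = m) (a : 'rV[R]_(0 + m)) :
  castmx (erefl, e) a = rsubmx a.
Proof. by apply/matrixP => i j; rewrite castmxE mxE; congr (a _ _); apply/val_inj. Qed.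

Lemma castmx_addn0 m (e : (m + 0)%N = m) (a : 'rV[R]_(m + 0)) :
  castmx (erefl, e) a = lsubmx a.
Proof. by apply/matrixP => i j; rewrite castmxE mxE; congr (a _ _); apply/val_inj. Qed.

Definition dsum_map m n p q (f : 'rV[R]_m -> 'rV[R]_n) (g : 'rV[R]_p -> 'rV[R]_q)
  (a : 'rV[R]_(m + p)) : 'rV[R]_(n + q) :=
  row_mx (f (lsubmx a)) (g (rsubmx a)).

Lemma dsum_map_row_mx m n p q (f : 'rV[R]_m -> 'rV[R]_n) (g : 'rV[R]_p -> 'rV[R]_q)
    u v :
  dsum_map f g (row_mx u v) = row_mx (f u) (g v).
Proof. by rewrite /dsum_map row_mxKl row_mxKr. Qed.

Definition row_swap m n (a : 'rV[R]_(m + n)) : 'rV[R]_(n + m) :=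
  row_mx (rsubmx a) (lsubmx a).

Lemma row_swap_row_mx m n (u : 'rV[R]_m) (v : 'rV[R]_n) :
  row_swap (row_mx u v) = row_mx v u.
Proof. by rewrite /row_swap row_mxKl row_mxKr. Qed.

Lemma row_swapK m n : cancel (@row_swap m n) (@row_swap n m).
Proof. by move=> a; case: (row_splitP a) => u v; rewrite !row_swap_row_mx. Qed.

Lemma row_swap_affine m n t (a b : 'rV[R]_(m + n)) :
  row_swap (t *: a + (1 - t) *: b) = t *: row_swap a + (1 - t) *: row_swap b.
Proof. by rewrite /row_swap !linearD !linearZ /= !scale_row_mx add_row_mx. Qed.

End RowBlocks.

Section GraphBifunctions.
Variable R : realType.
Local Open Scope ereal_scope.

Definition graph_bif m n (f : 'rV[R]_m -> 'rV[R]_n) : bifun R m n :=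
  fun u x => if f u == x then 0 else +oo.

Lemma id_bif_graph n : @id_bif R n = graph_bif id.
Proof. by []. Qed.

Lemma convex_graph_bif m n (f : 'rV[R]_m -> 'rV[R]_n) :
  (forall t u v, f (t *: u + (1 - t) *: v) = t *: f u + (1 - t) *: f v)%R ->
  convex_bifun (graph_bif f).
Proof.
move=> f_affine u u' x x' a b t; rewrite /graph_bif f_affine.
case: eqP => [<-|//]; case: eqP => [<-|//]; rewrite eqxx !lee_fin.
by move=> a_ge0 b_ge0 /andP[t_ge0 t_le1]; rewrite addr_ge0 ?mulr_ge0 ?subr_ge0.
Qed.

Lemma bcomp_graphl m n p (f : 'rV[R]_m -> 'rV[R]_n) (G : bifun R n p) :
  bcomp (graph_bif f) G = fun u y => G (f u) y.
Proof. by apply/funext => u; apply/funext => y; exact: ereal_inf_dadd_indicator. Qed.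

Lemma bcomp_graphr m n p (F : bifun R m n) (f : 'rV[R]_n -> 'rV[R]_p) g :
  cancel f g -> cancel g f -> bcomp F (graph_bif f) = fun u y => F u (g y).
Proof.
move=> fK gK; apply/funext => u; apply/funext => y.
rewrite -(ereal_inf_dadd_indicator (g y) (F u)); congr ereal_inf.
apply: eq_imagel => x _; rewrite /iadd /graph_bif daddeC.
by have -> : (f x == y) = (g y == x) by apply/eqP/eqP => <-; rewrite ?fK ?gK.
Qed.

Lemma bcomp_graph m n p (f : 'rV[R]_m -> 'rV[R]_n) (g : 'rV[R]_n -> 'rV[R]_p) :
  bcomp (graph_bif f) (graph_bif g) = graph_bif (g \o f).
Proof. by rewrite bcomp_graphl. Qed.

Lemma dsum_row_mx m n p q (F : bifun R m n) (G : bifun R p q) u y x z :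
  dsum F G (row_mx u y) (row_mx x z) = iadd (F u x) (G y z).
Proof. by rewrite /dsum !row_mxKl !row_mxKr. Qed.

Lemma dsum_graph m n p q (f : 'rV[R]_m -> 'rV[R]_n) (g : 'rV[R]_p -> 'rV[R]_q) :
  dsum (graph_bif f) (graph_bif g) = graph_bif (dsum_map f g).
Proof.
apply/funext => a; apply/funext => b.
case: (row_splitP a) => u y; case: (row_splitP b) => x z.
rewrite dsum_row_mx /graph_bif dsum_map_row_mx eq_row_mxE.
exact: iadd_indicator.
Qed.

Lemma castbf_graph m n m' n' (e1 : m = m') (e2 : n = n') (f : 'rV[R]_m -> 'rV[R]_n) :
  castbf e1 e2 (graph_bif f) =
  graph_bif (fun a => castmx (erefl, e2) (f (castmx (erefl, esym e1) a))).
Proof.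
apply/funext => a; apply/funext => b; rewrite /castbf /graph_bif.
by congr (if _ then _ else _); apply/eqP/eqP => [->|<-]; rewrite castmx_comp castmx_id.
Qed.

End GraphBifunctions.

Section DirectSum.
Variable R : realType.
Local Open Scope ereal_scope.

Lemma convex_dsum m n p q (F : bifun R m n) (G : bifun R p q) :
  convex_bifun F -> convex_bifun G -> convex_bifun (dsum F G).
Proof.
move=> cF cG u u' x x' a b t /dadde_le_EFin_split[a1 [a2 [Fa Ga <-]]].
move=> /dadde_le_EFin_split[b1 [b2 [Fb Gb <-]]] t01.
rewrite /dsum !linearD !linearZ /=.
apply: le_trans (lee_dD (cF _ _ _ _ _ _ _ Fa Fb t01) (cG _ _ _ _ _ _ _ Ga Gb t01)) _.
by rewrite -dEFinD lee_fin !mulrDr addrACA.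
Qed.

Lemma dsum_id m n : dsum (@id_bif R m) (@id_bif R n) = @id_bif R (m + n).
Proof.
rewrite !id_bif_graph dsum_graph; congr graph_bif.
by apply/funext => a; rewrite /dsum_map hsubmxK.
Qed.

Lemma dsum_bcomp m n k p q r (F : bifun R m n) (F' : bifun R n k)
    (G : bifun R p q) (G' : bifun R q r) :
  dsum (bcomp F F') (bcomp G G') = bcomp (dsum F G) (dsum F' G').
Proof.
apply/funext => a; apply/funext => b.
rewrite /dsum /bcomp iaddE ereal_inf_dadd; congr ereal_inf.
apply/seteqP; split => _ [X _ <-].
  by exists (row_mx X.1 X.2) => //; rewrite !row_mxKl !row_mxKr !iaddE daddeACA.
by exists (lsubmx X, rsubmx X) => //; rewrite !iaddE daddeACA.
Qed.

Lemma dsumA m n p q r s (F : bifun R m n) (G : bifun R p q) (H : bifun R r s) :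
  dsum (dsum F G) H = castbf (addnA m p r) (addnA n q s) (dsum F (dsum G H)).
Proof.
apply/funext => a; apply/funext => b; rewrite /castbf.
case: (row_splitP a) => a12 a3; case: (row_splitP a12) => a1 a2.
case: (row_splitP b) => b12 b3; case: (row_splitP b12) => b1 b2.
by rewrite -!row_mxA !dsum_row_mx !iaddE daddeA.
Qed.

Lemma id_bif0 (x y : 'rV[R]_0) : id_bif x y = 0.
Proof. by rewrite (thinmx0 x) (thinmx0 y) /id_bif eqxx. Qed.

Lemma dsum0l m n (F : bifun R m n) :
  dsum (@id_bif R 0) F = castbf (esym (add0n m)) (esym (add0n n)) F.
Proof.
apply/funext => a; apply/funext => b.
by rewrite /dsum /castbf id_bif0 !castmx_add0n iaddE dadd0e.
Qed.

Lemma dsum0r m n (F : bifun R m n) :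
  dsum F (@id_bif R 0) = castbf (esym (addn0 m)) (esym (addn0 n)) F.
Proof.
apply/funext => a; apply/funext => b.
by rewrite /dsum /castbf id_bif0 !castmx_addn0 iaddE dadde0.
Qed.

End DirectSum.

Definition sym_bif (R : realType) (m n : nat) : bifun R (m + n) (n + m) :=
  graph_bif (@row_swap R m n).
Arguments sym_bif {R} m n.

Section Symmetry.
Variable R : realType.

Lemma convex_sym_bif m n : convex_bifun (@sym_bif R m n).
Proof. exact/convex_graph_bif/row_swap_affine. Qed.

Lemma bcomp_dsum_sym m m' n n' (F : bifun R m m') (G : bifun R n n') :
  bcomp (dsum F G) (sym_bif m' n') = bcomp (sym_bif m n) (dsum G F).
Proof.
rewrite bcomp_graphl (bcomp_graphr _ (@row_swapK R m' n') (@row_swapK R n' m')).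
apply/funext => a; apply/funext => c.
case: (row_splitP a) => u y; case: (row_splitP c) => z x.
by rewrite !row_swap_row_mx !dsum_row_mx !iaddE daddeC.
Qed.

Lemma bcomp_sym_bifK m n : bcomp (sym_bif m n) (sym_bif n m) = @id_bif R (m + n).
Proof.
rewrite bcomp_graph id_bif_graph; congr graph_bif.
by apply/funext => a; exact: row_swapK.
Qed.

Lemma sym_bif_hexagon m n p :
  castbf (addnA m n p) (esym (addnA n p m)) (@sym_bif R m (n + p)) =
  bcomp (castbf (erefl ((m + n) + p)%N) (esym (addnA n m p))
                (dsum (sym_bif m n) (@id_bif R p)))
        (dsum (@id_bif R n) (sym_bif m p)).
Proof.
rewrite /sym_bif id_bif_graph !dsum_graph !castbf_graph bcomp_graph; congr graph_bif.
apply/funext => a; case: (row_splitP a) => a12 a3; case: (row_splitP a12) => a1 a2 /=.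
by rewrite castmx_id !dsum_map_row_mx -!row_mxA !row_swap_row_mx row_mxKl row_mxKr
  -row_mxA dsum_map_row_mx row_swap_row_mx.
Qed.

End Symmetry.

Theorem mainTheorem2 (R : realType) :
  (* (+) sends morphisms of Conv to morphisms of Conv *)
  (forall (m n p q : nat) (F : bifun R m n) (G : bifun R p q),
     convex_bifun F -> convex_bifun G -> convex_bifun (dsum F G)) /\
  (* functoriality: identities *)
  (forall m n : nat, dsum (@id_bif R m) (@id_bif R n) = @id_bif R (m + n)) /\
  (* functoriality: composition *)
  (forall (m n k p q r : nat) (F : bifun R m n) (F' : bifun R n k)
          (G : bifun R p q) (G' : bifun R q r),
     convex_bifun F -> convex_bifun F' -> convex_bifun G -> convex_bifun G' ->
     dsum (bcomp F F') (bcomp G G') = bcomp (dsum F G) (dsum F' G')) /\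
  (* strict associativity *)
  (forall (m n p q r s : nat) (F : bifun R m n) (G : bifun R p q) (H : bifun R r s),
     convex_bifun F -> convex_bifun G -> convex_bifun H ->
     dsum (dsum F G) H = castbf (addnA m p r) (addnA n q s) (dsum F (dsum G H))) /\
  (* strict left and right unit R^0 *)
  (forall (m n : nat) (F : bifun R m n), convex_bifun F ->
     dsum (@id_bif R 0) F = castbf (esym (add0n m)) (esym (add0n n)) F /\
     dsum F (@id_bif R 0) = castbf (esym (addn0 m)) (esym (addn0 n)) F) /\
  (* symmetry *)
  (exists sigma : forall m n : nat, bifun R (m + n) (n + m),
     (forall m n, convex_bifun (sigma m n)) /\
     (* naturality *)
     (forall (m m' n n' : nat) (F : bifun R m m') (G : bifun R n n'),
        convex_bifun F -> convex_bifun G ->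
        bcomp (dsum F G) (sigma m' n') = bcomp (sigma m n) (dsum G F)) /\
     (* involutivity *)
     (forall m n, bcomp (sigma m n) (sigma n m) = @id_bif R (m + n)) /\
     (* hexagon (the associator being the identity) *)
     (forall m n p,
        castbf (addnA m n p) (esym (addnA n p m)) (sigma m (n + p)) =
        bcomp (castbf (erefl ((m + n) + p)%N) (esym (addnA n m p))
                     (dsum (sigma m n) (@id_bif R p)))
             (dsum (@id_bif R n) (sigma m p)))).
Proof.
(* Convexity is only needed for the first conjunct: the identities hold for
   arbitrary bifunctions. *)
split; first exact: convex_dsum.
split; first exact: dsum_id.
split; first by move=> *; exact: dsum_bcomp.
split; first by move=> *; exact: dsumA.
split; first by move=> m n F _; split; [exact: dsum0l | exact: dsum0r].
exists (@sym_bif R); split; first exact: convex_sym_bif.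
split; first by move=> *; exact: bcomp_dsum_sym.
split; first exact: bcomp_sym_bifK.
exact: sym_bif_hexagon.
Qed.
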